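(* Let $G$ be a signed digraph with vertex set $V$, $f$ a Boolean network on $G$, $i\in V$ and $a\in\{0,1\}$. Let $w$ be a canalizing word from $(i,a)$ with image $b$, and suppose no source of $G$ belongs to $\{w\}$. Then for every $j\in\{w\}$, $G$ has a path from $i$ to $j$ whose internal vertices are in $\{w\}$, which is positive if $a=b_j$ and negative otherwise.
   Context: A signed digraph on $V$ is $(V,E)$ with $E\subseteq V\times V\times\{-1,1\}$. Paths have no repeated vertices and are signed by the product of arc signs. A source is a vertex of in-degree zero. A Boolean network (BN) is $f:\{0,1\}^V\to\{0,1\}^V$; its signed interaction digraph has a positive (negative) arc from $j$ to $k$ iff for some $x$ with $x_j=0$, $f_k(x+e_j)-f_k(x)$ is positive (negative). A BN on $G$ is one whose signed interaction digraph is $G$. $f^k(x)$ is $x$ with $x_k$ replaced by $f_k(x)$; $f^{i_1\cdots i_\ell}=f^{i_\ell}\circ\cdots\circ f^{i_1}$; $\{w\}$ is the set of letters of $w$. A canalizing word from $(i,a)$ is a word $w$ over $V\setminus\{i\}$ without repeated letters such that for some configuration $b$ on $\{w\}$ (called the image of $w$), every $x\in\{0,1\}^V$ with $x_i=a$ satisfies $f^w(x)_{\{w\}}=b$. *)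

From mathcomp Require Import all_boot.
Set Implicit Arguments. Unset Strict Implicit. Unset Printing Implicit Defensive.

(* Signs {-1,1} are encoded as bool: true = +1 (positive), false = -1 (negative).
   A signed digraph on the finite vertex type V is its arc set
   E : {set V * V * bool}. *)

Definition config (V : finType) := {ffun V -> bool}.

Definition upd (V : finType) (x : config V) (j : V) (c : bool) : config V :=
  [ffun k => if k == j then c else x k].

Definition pos_arc (V : finType) (f : config V -> config V) (j k : V) : Prop :=
  exists x : config V, x j = false /\ f x k = false /\ f (upd x j true) k = true.
Definition neg_arc (V : finType) (f : config V -> config V) (j k : V) : Prop :=
  exists x : config V, x j = false /\ f x k = true /\ f (upd x j true) k = false.

Definition BN_on (V : finType) (E : {set V * V * bool}) (f : config V -> config V) : Prop :=
  forall j k s, (j, k, s) \in E <-> (if s then pos_arc f j k else neg_arc f j k).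

Definition is_source (V : finType) (E : {set V * V * bool}) (v : V) : Prop :=
  forall u s, (u, v, s) \notin E.

(* f^k and f^w (letters applied left to right: f^{i1..il} = f^{il} o ... o f^{i1}) *)
Definition fk (V : finType) (f : config V -> config V) (k : V) (x : config V) : config V :=
  upd x k (f x k).
Definition fw (V : finType) (f : config V -> config V) (w : seq V) (x : config V) : config V :=
  foldl (fun y k => fk f k y) x w.

(* w is a canalizing word from (i,a) whose image is b (b only matters on {w}) *)
Definition canalizing_with_image (V : finType) (f : config V -> config V)
    (i : V) (a : bool) (w : seq V) (b : V -> bool) : Prop :=
  uniq w /\ i \notin w /\
  forall x : config V, x i = a -> forall j, j \in w -> fw f w x j = b j.

(* A path from u: list of steps (next vertex, sign of the arc used). *)
Fixpoint walk (V : finType) (E : {set V * V * bool}) (u : V) (p : seq (V * bool)) : bool :=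
  if p is (v, s) :: q then ((u, v, s) \in E) && walk E v q else true.

Definition path_sign (V : finType) (p : seq (V * bool)) : bool :=
  foldr (fun e acc => if e.2 then acc else ~~ acc) true p.

Definition is_path (V : finType) (E : {set V * V * bool}) (u v : V) (p : seq (V * bool)) : Prop :=
  [/\ walk E u p, uniq (u :: map fst p) & last u (map fst p) = v].

Definition internal (V : finType) (u : V) (p : seq (V * bool)) : seq V :=
  behead (belast u (map fst p)).

From mathcomp Require Import all_boot.

(* Write w = w_0 ... w_(n-1). Since the letters of w are distinct, the final value of w_k is the
   one f assigns when w_k is updated; hence f_(w_k) equals b(w_k) on the subcube of configurations
   with x_i = a that agree with b on w_0, ..., w_(k-1), a subcube on which that prefix of w acts as
   the identity. As w_k is not a source, f_(w_k) is not constant, and moving from a configuration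
   where f_(w_k) differs from b(w_k) into the subcube one coordinate at a time exhibits an arc
   u -> w_k with u = i or u an earlier letter, whose sign compares the pinned value of x_u with
   b(w_k). By induction on k, this arc extends a path from i to u of sign (a == b(u)). *)

Set Implicit Arguments. Unset Strict Implicit. Unset Printing Implicit Defensive.

Section Configurations.
Variable V : finType.
Implicit Types (x z : config V) (f : config V -> config V).

Lemma updE x j c k : upd x j c k = if k == j then c else x k.
Proof. by rewrite ffunE. Qed.

Lemma upd_id x j : upd x j (x j) = x.
Proof. by apply/ffunP => k; rewrite updE; case: eqP => // ->. Qed.

Lemma upd_upd x j c d : upd (upd x j c) j d = upd x j d.
Proof. by apply/ffunP => k; rewrite !updE; case: eqP. Qed.

Lemma fw_cat f s1 s2 x : fw f (s1 ++ s2) x = fw f s2 (fw f s1 x).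
Proof. exact: foldl_cat. Qed.

Lemma fw_rcons f s v x : fw f (rcons s v) x = fk f v (fw f s x).
Proof. exact: foldl_rcons. Qed.

Lemma fw_notin f s x j : j \notin s -> fw f s x j = x j.
Proof.
elim: s x => [|v s IHs] x //; rewrite in_cons negb_or => /andP[jv js].
by rewrite -cat1s fw_cat IHs //= updE (negbTE jv).
Qed.

Lemma subcube_flip (g : config V -> bool) (t : V -> bool) (S : seq V) c z0 :
  (forall z, {in S, forall v, z v = t v} -> g z = c) -> g z0 != c ->
  exists u z, [/\ u \in S, g z != c & g (upd z u (t u)) = c].
Proof.
(* A counterexample z closest to the subcube on S is one coordinate away from satisfying g = c. *)
move=> gS gz0; pose dist z := #|[pred v in S | z v != t v]|.
case: (@arg_minnP _ z0 (fun z => g z != c) dist gz0) => z gz zmin.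
have [u /andP[uS zu]] : exists u, (u \in S) && (z u != t u).
  apply/existsP/contraT => /existsPn zS; rewrite gS ?eqxx // in gz => v vS.
  by apply/eqP; move: (zS v); rewrite vS negbK.
exists u, z; split=> //; apply/eqP/negPn/negP => /zmin.
rewrite leqNgt => /negP; apply; apply/proper_card/properP; split.
  apply/subsetP => v; rewrite !inE updE.
  by case: (v =P u) => [->|]; rewrite ?eqxx ?andbF.
by exists u; rewrite !inE ?updE ?eqxx ?uS.
Qed.

End Configurations.

Lemma mem_take_le (T : eqType) m n (s : seq T) x :
  m <= n -> x \in take m s -> x \in take n s.
Proof. by move=> mn; rewrite -(take_takel s mn) => /mem_take. Qed.

Lemma nth_notin_take (T : eqType) (x0 : T) s k :
  uniq s -> k < size s -> nth x0 s k \notin take k s.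
Proof. by move=> s_uniq ks; rewrite in_take ?mem_nth // index_uniq // ltnn. Qed.

Section Paths.
Variables (V : finType) (E : {set V * V * bool}).
Implicit Types (p : seq (V * bool)).

Lemma walk_rcons u p v s :
  walk E u (rcons p (v, s)) = walk E u p && ((last u (map fst p), v, s) \in E).
Proof. by elim: p u => [|[v' s'] p IHp] u /=; rewrite ?andbT // IHp andbA. Qed.

Lemma path_sign_rcons p v s : path_sign (rcons p (v, s)) = (path_sign p == s).
Proof.
elim: p => [|[v' s'] p IHp] /=; first by case: s.
by rewrite IHp; case: s'; case: (path_sign p); case: (s).
Qed.

Lemma is_path_rcons i u j s p :
  is_path E i u p -> (u, j, s) \in E -> j \notin i :: map fst p ->
  is_path E i j (rcons p (j, s)).
Proof.
case=> walk_p uniq_p last_p uj j_new; split.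
- by rewrite walk_rcons walk_p last_p.
- by rewrite map_rcons -rcons_cons rcons_uniq j_new.
- by rewrite map_rcons last_rcons.
Qed.

Lemma mem_internal i p v : v \in internal i p -> v \in map fst p.
Proof. by rewrite /internal; case: (map fst p) => //= v' vs /mem_belast. Qed.

End Paths.

Section InteractionGraph.
Variables (V : finType) (E : {set V * V * bool}) (f : config V -> config V).
Hypothesis fE : BN_on E f.
Implicit Types (x z : config V).

Lemma BN_on_arc_switch_on x u j :
  x u = false -> f x j != f (upd x u true) j -> (u, j, f (upd x u true) j) \in E.
Proof.
move=> xu; case fxu: (f (upd x u true) j); case fx: (f x j) => //= _;
  by apply/fE; exists x.
Qed.

Lemma BN_on_arc_upd z u t j :
  f z j != f (upd z u t) j -> (u, j, t == f (upd z u t) j) \in E.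
Proof.
move=> fzj; have zut : z u != t by apply: contraNneq fzj => <-; rewrite upd_id.
have {zut} : z u = ~~ t by move: zut; case: (z u); case: (t).
case: t fzj => fzj /= zu; first exact: BN_on_arc_switch_on.
set y := upd z u false in fzj *.
have zK : upd y u true = z by rewrite upd_upd -zu upd_id.
have -> : (false == f y j) = f z j by move: fzj; case: (f z j); case: (f y j).
by rewrite -{1}zK; apply: BN_on_arc_switch_on; rewrite ?updE ?eqxx // zK eq_sym.
Qed.

Lemma BN_on_nonsource_nonconstant j c : ~ is_source E j -> exists z, f z j = c.
Proof.
move=> jE; have /existsP[u /existsP[s /fE]] : [exists u, exists s, (u, j, s) \in E].
  apply/contraT => /existsPn noarc; exfalso; apply: jE => u s.
  by move/existsPn/(_ s): (noarc u).
by case: s => -[x [_ [fx fux]]]; case: c; by [exists x | exists (upd x u true)].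
Qed.

End InteractionGraph.

Section CanalizingWord.
Variables (V : finType) (f : config V -> config V).
Variables (i : V) (a : bool) (w : seq V) (b : V -> bool).
Hypotheses (w_uniq : uniq w) (i_notin_w : i \notin w).
Hypothesis fw_image : forall x : config V, x i = a -> {in w, forall j, fw f w x j = b j}.
Implicit Types (x z : config V).

Definition pinned v := if v == i then a else b v.

Lemma pinned_letter v : v \in w -> pinned v = b v.
Proof. by move=> vw; rewrite /pinned; case: eqP vw => // ->; rewrite (negbTE i_notin_w). Qed.

Lemma letter_after_prefix k x : k < size w -> x i = a ->
  f (fw f (take k w) x) (nth i w k) = b (nth i w k).
Proof.
move=> kw xi; rewrite -(fw_image xi (mem_nth i kw)); set j := nth i w k.
have w_split : w = take k w ++ j :: drop k.+1 w by rewrite -drop_nth // cat_take_drop.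
have j_notin_suffix : j \notin drop k.+1 w.
  by move: w_uniq; rewrite {1}w_split cat_uniq /= => /and3P[_ _ /andP[]].
by rewrite [in RHS]w_split fw_cat -cat1s fw_cat fw_notin //= updE eqxx.
Qed.

Lemma fw_prefix_id k z : k <= size w ->
  {in i :: take k w, forall v, z v = pinned v} -> fw f (take k w) z = z.
Proof.
elim: k => [|k IHk] kw zP; first by rewrite take0.
have /sub_in1/(_ _ zP) zP' : {subset i :: take k w <= i :: take k.+1 w}.
  by move=> v; rewrite !inE => /orP[-> // | /(mem_take_le (leqnSn k)) ->]; rewrite orbT.
have IHk' := IHk (ltnW kw) zP'.
rewrite (take_nth i kw) fw_rcons IHk' /fk.
have zi : z i = a by rewrite zP' ?mem_head // /pinned eqxx.
have := letter_after_prefix kw zi; rewrite IHk' => ->.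
rewrite -pinned_letter ?mem_nth // -zP ?upd_id //.
by rewrite (take_nth i kw) inE mem_rcons mem_head orbT.
Qed.

Lemma letter_on_subcube k z : k < size w ->
  {in i :: take k w, forall v, z v = pinned v} -> f z (nth i w k) = b (nth i w k).
Proof.
move=> kw zP; have zi : z i = a by rewrite zP ?mem_head // /pinned eqxx.
by rewrite -{1}(fw_prefix_id (ltnW kw) zP) letter_after_prefix.
Qed.

Variable E : {set V * V * bool}.
Hypotheses (fE : BN_on E f) (no_source : forall v, v \in w -> ~ is_source E v).

Lemma arc_into_letter k : k < size w ->
  exists2 u, u \in i :: take k w & (u, nth i w k, pinned u == b (nth i w k)) \in E.
Proof.
move=> kw; set j := nth i w k.
have [z0 fz0] := BN_on_nonsource_nonconstant fE (~~ b j) (no_source (mem_nth i kw)).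
have fz0j : f z0 j != b j by rewrite fz0; case: (b j).
have [u [z [uS fz fzu]]] := subcube_flip (fun z => @letter_on_subcube k z kw) fz0j.
by exists u => //; rewrite -fzu; apply: (BN_on_arc_upd fE); rewrite fzu.
Qed.

Lemma signed_path_to_letter k : k < size w ->
  exists p, [/\ is_path E i (nth i w k) p, {subset map fst p <= take k.+1 w}
              & path_sign p = (a == b (nth i w k))].
Proof.
elim/ltn_ind: k => k IHk kw; set j := nth i w k.
have [u uS uj] := arc_into_letter kw.
have [p [up pS p_sign]] : exists p, [/\ is_path E i u p, {subset map fst p <= take k w}
                                        & path_sign p = (a == pinned u)].
  case/predU1P: uS => [-> | ut]; first by exists [::]; rewrite /pinned !eqxx.
  have uw := mem_take ut; have mk : index u w < k by rewrite -in_take.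
  have [p [up pS p_sign]] := IHk _ mk (ltn_trans mk kw).
  rewrite nth_index // in up p_sign; exists p; split => //.
    by move=> v /pS; apply: mem_take_le.
  by rewrite pinned_letter.
have j_notin_prefix : j \notin take k w := nth_notin_take i w_uniq kw.
exists (rcons p (j, pinned u == b j)); split.
- apply: is_path_rcons up uj _; rewrite inE negb_or; apply/andP; split.
    by apply: contraNneq i_notin_w => <-; apply: mem_nth.
  by apply: contra j_notin_prefix => /pS.
- move=> v; rewrite map_rcons mem_rcons inE (take_nth i kw) mem_rcons inE.
  by case/orP=> [-> // | /pS ->]; rewrite orbT.
- by rewrite path_sign_rcons p_sign; case: a; case: (pinned u); case: (b j).
Qed.

End CanalizingWord.

Theorem lemma6 (V : finType) (E : {set V * V * bool}) (f : config V -> config V)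
  (i : V) (a : bool) (w : seq V) (b : V -> bool) :
  BN_on E f ->
  canalizing_with_image f i a w b ->
  (forall v, v \in w -> ~ is_source E v) ->
  forall j, j \in w ->
    exists p : seq (V * bool),
      is_path E i j p /\
      (forall v, v \in internal i p -> v \in w) /\
      path_sign p = (a == b j).
Proof.
move=> fE [w_uniq [i_notin_w fw_image]] no_source j jw.
have jw_index : index j w < size w by rewrite index_mem.
have [p [ijp pS p_sign]] :=
  signed_path_to_letter w_uniq i_notin_w fw_image fE no_source jw_index.
rewrite nth_index // in ijp p_sign.
by exists p; split=> //; split=> // v /mem_internal/pS/mem_take.
Qed.
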